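(* Let $l,m\in\mathbb N$, $f:[l]\to[m]$ and $(H,\varrho)\in G_C[l]$. Then $f_{H*}(\mu_{(H,\varrho)})=\mu_{G_Cf(H,\varrho)}$, where on the left $f_{H*}:W(H)\to W(Gf(H))$ is the weight push-forward.
   Context: $\mathbb N=\{0,1,2,\dots\}$, $[l]=\{0,\dots,l-1\}$. $G[l]$ = sets of non-empty subsets of $[l]$ (hypergraphs), $Gf(H)=\{f(X)\mid X\in H\}$. $\mathsf A,\mathsf M$ finite additive commutative monoids; for finite $X\subset\mathbb N$, $\mathsf A^X$ = functions $X\to\mathsf A$; for $\phi:X\to Y$, $\phi_\star(w)(s)=\sum_{r:\phi(r)=s}w(r)$ and for $\varpi:\mathsf A^X\to\mathsf M$, $\phi_*(\varpi)(v)=\sum_{w\in\mathsf A^X:\phi_\star(w)=v}\varpi(w)$. A calibration $\varrho$ of $H$ assigns a function $\varrho_X:\mathsf A^X\to\mathsf M$ to each $X\in H$; $G_C[l]=\{(H,\varrho)\}$ and $G_Cf(H,\varrho)=(Gf(H),f_{H*}(\varrho))$ with $f_{H*}(\varrho)_Y=\sum_{X\in H,f(X)=Y}(f|_X)_*(\varrho_X)$. $W(H)=\mathsf M^H$ is the monoid of weight functions $H\to\mathsf M$, with weight push-forward $f_{H*}(\alpha)_Y=\sum_{X\in H,f(X)=Y}\alpha_X$ for $Y\in Gf(H)$. The weight function of $(H,\varrho)$ is $\mu_{(H,\varrho)}\in W(H)$, $\mu_{(H,\varrho)X}=\sum_{w\in\mathsf A^X}\varrho_X(w)$. *)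

From HB Require Import structures.
From mathcomp Require Import all_boot all_algebra.
Set Implicit Arguments. Unset Strict Implicit. Unset Printing Implicit Defensive.
Import GRing.Theory.
Local Open Scope ring_scope.

(* A finite subset X of [l] = {0,...,l-1} is a {set 'I_l}; the finite type of
   its elements is [elt X]. *)
Definition elt (l : nat) (X : {set 'I_l}) : Type := {x : 'I_l | x \in X}.
HB.instance Definition _ l X := Finite.on (@elt l X).

Definition funs (A : Type) (l : nat) (X : {set 'I_l}) := {ffun elt X -> A}.

Definition hypergraph (l : nat) (H : {set {set 'I_l}}) : bool := set0 \notin H.

Definition Gf (l m : nat) (f : 'I_l -> 'I_m) (H : {set {set 'I_l}}) :
  {set {set 'I_m}} := (fun X : {set 'I_l} => f @: X) @: H.

(* the push-forward phi_star along f restricted to X, with target the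
   subset Y of [m] (used with Y = f(X), where it is (f|_X)_star):
   phi_star(w)(s) = sum_{r in X, f r = s} w r *)
Definition pushw (A : nmodType) (l m : nat) (f : 'I_l -> 'I_m)
  (X : {set 'I_l}) (Y : {set 'I_m}) (w : funs A X) : funs A Y :=
  [ffun s : elt Y => \sum_(r : elt X | f (val r) == val s) w r].

Definition calibration (A M : Type) (l : nat) :=
  forall X : {set 'I_l}, funs A X -> M.

Definition cal_push (A : finNmodType) (M : nmodType) (l m : nat)
  (f : 'I_l -> 'I_m) (H : {set {set 'I_l}}) (rho : calibration A M l) :
  calibration A M m :=
  fun Y v => \sum_(X in H | f @: X == Y)
               \sum_(w : funs A X | pushw f Y w == v) rho X w.

(* weight function of (H, rho): mu_X = sum_{w in A^X} rho_X(w)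
   (a weight function H -> M, represented by its values on all subsets) *)
Definition weight (A : finNmodType) (M : nmodType) (l : nat)
  (rho : calibration A M l) : {set 'I_l} -> M :=
  fun X => \sum_(w : funs A X) rho X w.

Definition wpush (M : nmodType) (l m : nat) (f : 'I_l -> 'I_m)
  (H : {set {set 'I_l}}) (alpha : {set 'I_l} -> M) : {set 'I_m} -> M :=
  fun Y => \sum_(X in H | f @: X == Y) alpha X.

From HB Require Import structures.
From mathcomp Require Import all_boot all_algebra.
Set Implicit Arguments. Unset Strict Implicit. Unset Printing Implicit Defensive.

Lemma weight_cal_push (A M : finNmodType) (l m : nat) (f : 'I_l -> 'I_m)
    (H : {set {set 'I_l}}) (rho : calibration A M l) :
  weight (cal_push f H rho) =1 wpush f H (weight rho).
Proof.
move=> Y; rewrite /weight /cal_push exchange_big /=.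
apply: eq_bigr => X _.
(* The fibres of [pushw f Y] partition [A^X]. *)
by rewrite [RHS](partition_big (pushw f Y) predT).
Qed.

Theorem proposition3p41 (A M : finNmodType) (l m : nat) (f : 'I_l -> 'I_m)
  (H : {set {set 'I_l}}) (rho : calibration A M l) :
  hypergraph H ->
  forall Y, Y \in Gf f H ->
    wpush f H (weight rho) Y = weight (cal_push f H rho) Y.
Proof. by move=> _ Y _; rewrite weight_cal_push. Qed.
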